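(* Every HCA graph with at least one edge contains an essential edge.
   Context: An HCA (Helly circular-arc) graph is a graph $G$ admitting a map $\alpha$ from $V(G)$ to arcs of a discrete circle (sets of consecutive points of a directed cycle) such that distinct vertices $u,v$ are adjacent iff $\alpha(u)\cap\alpha(v)\ne\emptyset$, and the family of arcs has the Helly property (every pairwise intersecting subfamily has a common point). A maxclique is an inclusion-maximal clique; an edge is essential if it is contained in exactly one maxclique. *)

From mathcomp Require Import all_boot.
Set Implicit Arguments. Unset Strict Implicit. Unset Printing Implicit Defensive.

(* A simple graph: vertex set a finType T, adjacency a symmetric irreflexive
   boolean relation e. *)

(* The discrete circle with n >= 1 points is 'I_n, directed by i |-> i+1 mod n.
   The arc starting at s of length l (1 <= l <= n) is
   {s, s+1, ..., s+l-1} (mod n). *)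
Definition arc_of (n : nat) (s : 'I_n) (l : nat) : {set 'I_n} :=
  [set x : 'I_n | (x + n - s) %% n < l].

Definition is_arc (n : nat) (A : {set 'I_n}) : Prop :=
  exists (s : 'I_n) (l : nat), 0 < l <= n /\ A = arc_of s l.

Definition helly (T : finType) (n : nat) (alpha : T -> {set 'I_n}) : Prop :=
  forall S : {set T},
    (forall u v, u \in S -> v \in S -> alpha u :&: alpha v != set0) ->
    exists p : 'I_n, forall u, u \in S -> p \in alpha u.

Definition HCA (T : finType) (e : rel T) : Prop :=
  exists (n : nat) (alpha : T -> {set 'I_n}),
    0 < n /\
    (forall v, is_arc (alpha v)) /\
    (forall u v, u != v -> (e u v <-> alpha u :&: alpha v != set0)) /\
    helly alpha.

Definition clique (T : finType) (e : rel T) (K : {set T}) : bool :=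
  [forall u in K, forall v in K, (u != v) ==> e u v].

Definition maxclique (T : finType) (e : rel T) (K : {set T}) : bool :=
  maxset (clique e) K.

Definition essential (T : finType) (e : rel T) (u v : T) : bool :=
  #|[set K : {set T} | maxclique e K && (u \in K) && (v \in K)]| == 1.

From mathcomp Require Import all_boot zify.
Set Implicit Arguments. Unset Strict Implicit. Unset Printing Implicit Defensive.

(* Fix a Helly arc model alpha of the graph on the discrete circle 'I_n.  Call
   (u, v, t) an end pair when t is the last point of the arc alpha u, t lies in
   alpha v, and alpha u, alpha v do not cover the circle.
   - If end pairs exist, take one minimising #|alpha u :&: alpha v|.  By
     minimality, every arc meeting I := alpha u :&: alpha v either contains I or
     contains a fixed point o outside alpha u :|: alpha v, so these arcs pairwise
     intersect.
   - If there is no end pair, the arcs meeting a non-full arc alpha u all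
     contain the point right after the end of alpha u.
   In both cases the arcs meeting alpha u :&: alpha v pairwise intersect, and by
   the Helly property this forces uv to lie in a single maxclique. *)

Section Circle.
Variable n : nat.
Implicit Types (A : {set 'I_n}) (a b p s t x y z : 'I_n).

Definition dist a b : nat := (b + n - a) %% n.

Definition on_path a b x : bool := dist a x <= dist a b.

Definition is_end A t : bool := (t \in A) && (ordS t \notin A).

Lemma distE a b : dist a b = if a <= b then b - a else n + b - a.
Proof.
have := ltn_ord a; have := ltn_ord b; rewrite /dist => ltb lta.
case: (leqP a b) => ab; last by rewrite modn_small; lia.
by rewrite -addnBAC // modnDr modn_small; lia.
Qed.

Lemma ordSE p : nat_of_ord (ordS p) = if p.+1 < n then p.+1 else 0.
Proof.
rewrite /ordS /=; case: ltnP => lt; first by rewrite modn_small.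
have ->: p.+1 = n by have := ltn_ord p; lia.
by rewrite modnn.
Qed.

Lemma ord_neq a b : (a != b) = (nat_of_ord a != nat_of_ord b).
Proof. by []. Qed.

Ltac circle_arith :=
  rewrite /on_path ?ord_neq ?distE ?ordSE;
  repeat match goal with x : 'I_n |- _ => case: x => x ? /= end;
  repeat match goal with |- context [if ?a <= ?b then _ else _] => case: (leqP a b) end;
  intros; lia.

Lemma dist_xx a : dist a a = 0.
Proof. circle_arith. Qed.

Lemma on_path_xx t z : on_path t t z -> z = t.
Proof. by move=> h; apply: val_inj; move: h; circle_arith. Qed.

Lemma dist_ordS y p : ordS p != y -> dist y p < dist y (ordS p).
Proof. circle_arith. Qed.

Lemma path_trans s t y z : on_path s t y -> on_path y t z -> on_path s t z.
Proof. circle_arith. Qed.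

Lemma path_nest a b p : on_path b p a || on_path a p b.
Proof. circle_arith. Qed.

Lemma path_cover y t x : y != t -> on_path y t x || on_path t y x.
Proof. circle_arith. Qed.

Lemma path_avoid a z t x : ~~ on_path a t z -> on_path a t x -> on_path z t x.
Proof. circle_arith. Qed.

Lemma in_arc s l x : (x \in arc_of s l) = (dist s x < l).
Proof. by rewrite inE. Qed.

Lemma arc_start s l : 0 < l -> s \in arc_of s l.
Proof. by rewrite in_arc dist_xx. Qed.

Lemma arc_nonempty A : is_arc A -> A != set0.
Proof. by case=> s [l [/andP [l0 _] ->]]; apply/set0Pn; exists s; apply: arc_start. Qed.

(* Walking forward from a point of A to a point outside A, one leaves A at
   some last point p of A; p is the predecessor of the first point outside. *)
Lemma exit_end A y z : y \in A -> z \notin A -> exists2 p, is_end A p & on_path y z p.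
Proof.
move=> yA zA.
have zP : (z \notin A) && on_path y z z by rewrite zA /on_path leqnn.
case: (arg_minnP (P := fun x => (x \notin A) && on_path y z x) (dist y) zP).
move=> m /andP [mA ym] m_min.
have Spm : ordS (ord_pred m) = m := ord_predK m.
have lt_pm : dist y (ord_pred m) < dist y m.
  by rewrite -{2}Spm dist_ordS // Spm; apply: contraNneq mA => ->.
have yp : on_path y z (ord_pred m) by apply: leq_trans (ltnW lt_pm) ym.
exists (ord_pred m) => //; rewrite /is_end Spm mA andbT.
apply: contraT => pA; have := m_min (ord_pred m); rewrite pA yp leqNgt lt_pm.
by move=> /(_ isT).
Qed.

Lemma arc_has_end A z : is_arc A -> z \notin A -> exists t, is_end A t.
Proof.
move=> [s [l [/andP [l0 _] eA]]] zA.
have sA : s \in A by rewrite eA arc_start.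
by have [t t_end _] := exit_end sA zA; exists t.
Qed.

Lemma arc_end_path A t : is_arc A -> is_end A t ->
  exists s, forall x, (x \in A) = on_path s t x.
Proof.
move=> [s [l [/andP [l0 ln] ->]]] /andP []; rewrite !in_arc => st sSt.
have dst : dist s t = l.-1 by move: l0 ln st sSt; circle_arith.
by exists s => x; rewrite in_arc /on_path dst -{1}(prednK l0) ltnS.
Qed.

Lemma arc_closed A t y z : is_arc A -> is_end A t -> y \in A -> on_path y t z -> z \in A.
Proof. by move=> Aarc /(arc_end_path Aarc) [s As]; rewrite !As; apply: path_trans. Qed.

Lemma arc_wrap A a b z x : is_arc A -> a \in A -> b \in A -> z \notin A ->
  on_path a b z -> on_path b a x -> x \in A.
Proof.
move=> Aarc aA bA zA abz bax; have [t t_end] := arc_has_end Aarc zA.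
case/orP: (path_nest a b t) => [bta | atb].
- exact: arc_closed Aarc t_end bA (leq_trans bax bta).
- by rewrite (arc_closed Aarc t_end aA (leq_trans abz atb)) in zA.
Qed.

End Circle.

Section HellyArcModel.
Variables (T : finType) (e : rel T) (n : nat) (alpha : T -> {set 'I_n}).
Hypothesis e_sym : symmetric e.
Hypothesis alpha_arc : forall v, is_arc (alpha v).
Hypothesis alpha_adj : forall u v, u != v -> (e u v <-> alpha u :&: alpha v != set0).
Hypothesis alpha_helly : helly alpha.
Implicit Types (K : {set T}) (a b u v w : T).

Lemma cliqueP K : reflect (forall u v, u \in K -> v \in K -> u != v -> e u v) (clique e K).
Proof.
apply: (iffP forall_inP) => [cK u v uK vK | cK u uK].
  by move/forall_inP: (cK u uK) => /(_ v vK) /implyP.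
by apply/forall_inP => v vK; apply/implyP; apply: cK.
Qed.

Lemma clique_common_point K : clique e K -> exists q, forall w, w \in K -> q \in alpha w.
Proof.
move/cliqueP=> cK; apply: alpha_helly => a b aK bK.
have [->|ab] := eqVneq a b; first by rewrite setIid arc_nonempty.
exact/(alpha_adj ab)/cK.
Qed.

Definition meeting u v : {set T} := [set w | alpha w :&: (alpha u :&: alpha v) != set0].

(* If the arcs meeting alpha u :&: alpha v pairwise intersect, then uv is
   essential: they share a point y, and the vertices whose arcs contain y form
   a clique containing every maxclique through u and v, hence equal to it. *)
Lemma essential_of_pairwise u v : u != v -> alpha u :&: alpha v != set0 ->
  {in meeting u v &, forall w1 w2, alpha w1 :&: alpha w2 != set0} ->
  essential e u v.
Proof.
move=> uv uv_meet pairwise.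
have [y y_common] := alpha_helly pairwise.
pose C := [set w | y \in alpha w].
have C_clique : clique e C.
  apply/cliqueP => a b; rewrite !inE => ya yb ab.
  by apply/(alpha_adj ab)/set0Pn; exists y; rewrite inE ya yb.
have through_C K : maxclique e K -> u \in K -> v \in K -> K = C.
  move=> K_max uK vK; apply/esym/(maxsetP K_max).2 => //.
  have [q Kq] := clique_common_point (maxsetp K_max).
  apply/subsetP => w wK; rewrite inE y_common // inE.
  by apply/set0Pn; exists q; rewrite !inE !Kq.
have euv : e u v by apply/(alpha_adj uv).
have uv_clique : clique e [set u; v].
  apply/cliqueP => a b; rewrite !inE.
  by case/orP=> /eqP-> /orP[]/eqP->; rewrite ?eqxx // => _; rewrite // e_sym.
have [K0 K0_max uvK0] := maxset_exists uv_clique.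
have [uK0 vK0] : u \in K0 /\ v \in K0.
  by split; apply: (subsetP uvK0); rewrite !inE eqxx ?orbT.
apply/cards1P; exists C; apply/setP => K; rewrite !inE.
apply/idP/eqP => [/andP [/andP [K_max uK] vK] | ->]; first exact: through_C.
by rewrite -(through_C K0 K0_max uK0 vK0) uK0 vK0 !andbT.
Qed.

Definition end_pair u v t : bool :=
  [&& u != v, is_end (alpha u) t, t \in alpha v & alpha u :|: alpha v != setT].

(* For an end pair, the intersection contains the path from any of its
   points to t: otherwise alpha v would contain the complementary path. *)
Lemma end_pair_closed u v t y z : end_pair u v t ->
  y \in alpha u :&: alpha v -> on_path y t z -> z \in alpha u :&: alpha v.
Proof.
case/and4P => _ t_end tv not_cover /setIP [yu yv] ytz.
have zu := arc_closed (alpha_arc u) t_end yu ytz.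
rewrite inE zu /=; apply: contraR not_cover => zv.
have yt : y != t by apply: contraNneq zv => eyt; rewrite eyt in ytz; rewrite (on_path_xx ytz).
apply/eqP/setP => x; rewrite !inE; case/orP: (path_cover x yt) => [ytx | tyx].
- by rewrite (arc_closed (alpha_arc u) t_end yu ytx).
- by rewrite (arc_wrap (alpha_arc v) yv tv zv ytz tyx) orbT.
Qed.

Lemma end_pairs_nested w u v p : end_pair w u p -> end_pair w v p ->
  (alpha w :&: alpha u \subset alpha v) || (alpha w :&: alpha v \subset alpha u).
Proof.
move=> wup wvp; case: (boolP (alpha w :&: alpha u \subset alpha v)) => //= /subsetPn [a au av].
apply/subsetP => b bv; case/orP: (path_nest a b p) => [bpa | apb].
- by case/setIP: (end_pair_closed wvp bv bpa) => _ a_v; rewrite a_v in av.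
- by case/setIP: (end_pair_closed wup au apb).
Qed.

Section MinimalEndPair.
Variables (u v : T) (t : 'I_n).
Hypothesis uvt : end_pair u v t.
Hypothesis uvt_min : forall u' v' t',
  end_pair u' v' t' -> #|alpha u :&: alpha v| <= #|alpha u' :&: alpha v'|.

Lemma smaller_pair_covers u' v' t' : u' != v' -> is_end (alpha u') t' -> t' \in alpha v' ->
  alpha u' :&: alpha v' \proper alpha u :&: alpha v -> alpha u' :|: alpha v' = setT.
Proof.
move=> u'v' t'_end t'v' lt; apply/eqP; apply: contraTT (proper_card lt) => not_cover.
by rewrite -leqNgt; apply: (uvt_min (t' := t')); rewrite /end_pair u'v' t'_end t'v' not_cover.
Qed.

Lemma same_end_neighbor w : t \in alpha w -> ~~ (alpha u :&: alpha v \subset alpha w) ->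
  alpha u :|: alpha w = setT.
Proof.
case/and4P: uvt => _ t_end _ _ tw /subsetPn [z zI zw].
have uw : u != w by apply: contraNneq zw => <-; case/setIP: zI.
apply/eqP; apply: contraT => not_cover.
have uwt : end_pair u w t by rewrite /end_pair uw t_end tw not_cover.
have sub : alpha u :&: alpha w \proper alpha u :&: alpha v.
  apply/properP; split; last by exists z => //; rewrite inE (negbTE zw) andbF.
  apply/subsetP => a a_uw.
  have zna : ~~ on_path a t z.
    by apply: contraNN zw => atz; case/setIP: (end_pair_closed uwt a_uw atz).
  by apply: end_pair_closed uvt zI (path_avoid zna _); rewrite /on_path dist_xx.
by rewrite (smaller_pair_covers uw t_end tw sub) eqxx in not_cover.
Qed.

Lemma other_end_neighbor w y : y \in alpha w :&: (alpha u :&: alpha v) -> t \notin alpha w ->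
  (alpha w :|: alpha u == setT) || (alpha w :|: alpha v == setT).
Proof.
case/and4P: uvt => _ /andP [tu _] tv _ /setIP [yw yI] tw.
have [p p_end ytp] := exit_end yw tw.
have /setIP [pu pv] := end_pair_closed uvt yI ytp.
have wu : w != u by apply: contraNneq tw => ->.
have wv : w != v by apply: contraNneq tw => ->.
apply: contraT; rewrite negb_or => /andP [wu_nc wv_nc].
have wup : end_pair w u p by rewrite /end_pair wu p_end pu wu_nc.
have wvp : end_pair w v p by rewrite /end_pair wv p_end pv wv_nc.
have proper_of x : alpha w :&: alpha x \subset alpha u :&: alpha v ->
    alpha w :&: alpha x \proper alpha u :&: alpha v.
  by move=> sub; apply/properP; split => //; exists t; rewrite !inE ?tu ?tv // (negbTE tw).
case/orP: (end_pairs_nested wup wvp) => sub.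
- have sub' : alpha w :&: alpha u \subset alpha u :&: alpha v.
    by apply/subsetP => a a_wu; rewrite inE (subsetP sub _ a_wu); case/setIP: a_wu => _ ->.
  by rewrite (smaller_pair_covers wu p_end pu (proper_of _ sub')) eqxx in wu_nc.
- have sub' : alpha w :&: alpha v \subset alpha u :&: alpha v.
    by apply/subsetP => a a_wv; rewrite inE (subsetP sub _ a_wv); case/setIP: a_wv => _ ->.
  by rewrite (smaller_pair_covers wv p_end pv (proper_of _ sub')) eqxx in wv_nc.
Qed.

Lemma min_end_pair_neighbor w o : w \in meeting u v -> o \notin alpha u :|: alpha v ->
  (alpha u :&: alpha v \subset alpha w) || (o \in alpha w).
Proof.
rewrite inE => /set0Pn [y y_wI]; rewrite inE negb_or => /andP [ou ov].
case: (boolP (alpha u :&: alpha v \subset alpha w)) => //= nsub.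
case: (boolP (t \in alpha w)) => tw.
- by move/setP: (same_end_neighbor tw nsub) => /(_ o); rewrite !inE (negbTE ou).
- by case/orP: (other_end_neighbor y_wI tw) => /eqP /setP /(_ o);
    rewrite !inE ?(negbTE ou) ?(negbTE ov) orbF.
Qed.

Lemma min_end_pair_essential : essential e u v.
Proof.
case/and4P: uvt => uv /andP [tu _] tv not_cover.
rewrite -subTset in not_cover; have [o _ o_out] := subsetPn not_cover.
apply: essential_of_pairwise => //; first by apply/set0Pn; exists t; rewrite inE tu tv.
have meet_sub w1 w2 : w2 \in meeting u v -> alpha u :&: alpha v \subset alpha w1 ->
    alpha w1 :&: alpha w2 != set0.
  rewrite inE => /set0Pn [y /setIP [yw2 yI]] sub.
  by apply/set0Pn; exists y; rewrite inE yw2 (subsetP sub).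
move=> w1 w2 w1m w2m.
case/orP: (min_end_pair_neighbor w1m o_out) => [sub1 | o1]; first exact: meet_sub.
case/orP: (min_end_pair_neighbor w2m o_out) => [sub2 | o2].
  by rewrite setIC; apply: meet_sub.
by apply/set0Pn; exists o; rewrite inE o1 o2.
Qed.

End MinimalEndPair.

Lemma end_pair_essential_edge u v t : end_pair u v t ->
  exists a b, e a b /\ essential e a b.
Proof.
move=> uvt; case: (arg_minnP (P := fun x : T * T * 'I_n => end_pair x.1.1 x.1.2 x.2)
  (fun x => #|alpha x.1.1 :&: alpha x.1.2|) (uvt : end_pair (u, v, t).1.1 _ _)).
move=> [[a b] p] /= abp ab_min; exists a, b; split.
- case/and4P: abp => ab /andP [pa _] pb _.
  by apply/(alpha_adj ab)/set0Pn; exists p; rewrite inE pa pb.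
- by apply: min_end_pair_essential abp _ => u' v' t' h; apply: (ab_min (u', v', t')).
Qed.

Section NoEndPair.
Hypothesis no_end_pair : forall u v t, ~~ end_pair u v t.

Lemma no_end_pair_neighbor u t w : is_end (alpha u) t -> w != u ->
  alpha w :&: alpha u != set0 -> ordS t \in alpha w.
Proof.
move=> t_end wu /set0Pn [y /setIP [yw yu]].
have covers a b p : a != b -> is_end (alpha a) p -> p \in alpha b -> alpha a :|: alpha b = setT.
  by move=> ab p_end pb; apply/eqP; apply: contraNT (no_end_pair a b p) => nc; rewrite /end_pair ab p_end pb nc.
have Stu : ordS t \notin alpha u by case/andP: t_end.
case: (boolP (t \in alpha w)) => tw.
- have uw : u != w by rewrite eq_sym.
  by move/setP: (covers u w t uw t_end tw) => /(_ (ordS t));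
    rewrite !inE (negbTE Stu).
- have [p p_end ytp] := exit_end yw tw.
  move/setP: (covers w u p wu p_end (arc_closed (alpha_arc u) t_end yu ytp)) => /(_ (ordS t)).
  by rewrite !inE (negbTE Stu) orbF.
Qed.

(* Without end pairs, an edge uv with alpha u not full is essential: the arcs
   meeting alpha u other than alpha u share the point after its last point. *)
Lemma no_end_pair_essential u v : u != v -> alpha u :&: alpha v != set0 ->
  alpha u != setT -> essential e u v.
Proof.
move=> uv uv_meet u_nf.
rewrite -subTset in u_nf; have [z _ zu] := subsetPn u_nf.
have [t t_end] := arc_has_end (alpha_arc u) zu.
apply: essential_of_pairwise => // w1 w2; rewrite !inE => m1 m2.
have meet_u w : alpha w :&: (alpha u :&: alpha v) != set0 -> alpha w :&: alpha u != set0.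
  by case/set0Pn => y /setIP [yw /setIP [yu _]]; apply/set0Pn; exists y; rewrite inE yw yu.
case: (eqVneq w1 u) => [-> | w1u]; first by rewrite setIC meet_u.
case: (eqVneq w2 u) => [-> | w2u]; first exact: meet_u.
by apply/set0Pn; exists (ordS t); rewrite inE !(no_end_pair_neighbor t_end) ?meet_u.
Qed.

Hypothesis e_irr : irreflexive e.

(* If all arcs are full every edge is essential; otherwise some edge has an
   endpoint with a non-full arc. *)
Lemma no_end_pair_essential_edge : (exists u v, e u v) -> exists a b, e a b /\ essential e a b.
Proof.
move=> [u0 [v0 e0]].
have u0v0 : u0 != v0 by apply: contraTneq e0 => ->; rewrite e_irr.
have meet0 : alpha u0 :&: alpha v0 != set0 by apply/(alpha_adj u0v0).
case: (boolP [forall w, alpha w == setT]) => [/forallP all_full | /forallPn [w w_nf]].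
  exists u0, v0; split => //; apply: essential_of_pairwise => // w1 w2 _ _.
  by rewrite (eqP (all_full w1)) (eqP (all_full w2)) setIid -(eqP (all_full u0)) arc_nonempty.
have [u [v [uv uv_meet u_nf]]] :
    exists u v, [/\ u != v, alpha u :&: alpha v != set0 & alpha u != setT].
  case: (eqVneq (alpha u0) setT) => [u0_full | u0_nf]; last by exists u0, v0.
  have wu0 : w != u0 by apply: contraNneq w_nf => ->; rewrite u0_full.
  by exists w, u0; rewrite u0_full setIT arc_nonempty.
exists u, v; split; first exact/(alpha_adj uv).
exact: no_end_pair_essential.
Qed.

End NoEndPair.

End HellyArcModel.

Theorem lemma16 (T : finType) (e : rel T) :
  symmetric e -> irreflexive e -> HCA e ->
  (exists u v, e u v) ->
  exists u v, e u v /\ essential e u v.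
Proof.
move=> e_sym e_irr [n [alpha [_ [alpha_arc [alpha_adj alpha_helly]]]]] edge.
case: (pickP (fun x : T * T * 'I_n => end_pair alpha x.1.1 x.1.2 x.2)) => [[[u v] t] uvt | none].
- exact: (end_pair_essential_edge e_sym alpha_arc alpha_adj alpha_helly uvt).
- by apply: (no_end_pair_essential_edge e_sym alpha_arc alpha_adj alpha_helly _ e_irr)
    => // u v t; exact: negbT (none (u, v, t)).
Qed.
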